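(* In the setting described in the context, for every ordered subset $J$ of $\{1,\ldots,|L|\}$ with $1\leqslant |J|\leqslant n-1$, the line $\ell_J$ and the point $p_J$ are well-defined (that is, the intersections defining them are a line, respectively a point). Distinct ordered subsets $J$ give distinct lines $\ell_J$ and distinct points $p_J$. Furthermore, the line $\ell_J$ intersects $\pi_{|J|+1}$ in the point $p_J$.
   Context: Let ${\mathbb K}$ be a field, $n\geqslant 2$, and consider the projective space $\mathrm{PG}_n({\mathbb K})$. For two non-intersecting subspaces $x,y$, $x\oplus y$ denotes the subspace they span. Fix points $x_0,x_1,\ldots,x_n$ of $\mathrm{PG}_n({\mathbb K})$ in general position and put $\Sigma_i=x_0\oplus x_1\oplus\cdots\oplus x_i$ and $\pi_i=x_1\oplus\cdots\oplus x_i$ for $i=1,\ldots,n$. For $i=3,\ldots,n$ let $y_i$ be a point on the line $x_{i-1}\oplus x_i$ different from $x_{i-1}$ and $x_i$. Let $L$ be a finite set of lines of the plane $\Sigma_2$ which meet the line $\pi_2$ in pairwise distinct points, all different from $x_2$. Label the lines of $L$ as $\ell_{\{1\}},\ldots,\ell_{\{|L|\}}$ and put $p_{\{i\}}=\ell_{\{i\}}\cap\pi_2$. An ordered subset $J$ of $\{1,\ldots,|L|\}$ is a finite sequence of distinct elements of $\{1,\ldots,|L|\}$; if $|J|\geqslant 2$ write $J=(\ldots,b,a)$ where $a$ is the last and $b$ the second-to-last element, and let $J\setminus\{a\}$, $J\setminus\{b\}$ be the ordered subsets obtained by deleting $a$, respectively $b$ (keeping the order). For $2\leqslant |J|\leqslant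 n-1$ define recursively $$\ell_J=(x_{|J|+1}\oplus \ell_{J\setminus\{a\}})\cap(y_{|J|+1}\oplus \ell_{J\setminus\{b\}}),\qquad p_J=(x_{|J|+1}\oplus p_{J\setminus\{a\}})\cap(y_{|J|+1}\oplus p_{J\setminus\{b\}}).$$ *)

(* Projective space PG_n(K) = lattice of subspaces of K^(n+1);
   a subspace is represented by a square matrix 'M[K]_(n.+1) (its row space),
   span = (_ + _)%MS, intersection = (_ :&: _)%MS, equality of subspaces = (_ == _)%MS,
   points = rank 1, lines = rank 2. *)
From HB Require Import structures.
From mathcomp Require Import all_boot all_order all_algebra.
Set Implicit Arguments.
Unset Strict Implicit.
Unset Printing Implicit Defensive.
Import GRing.Theory.
Local Open Scope ring_scope.

Section Defs.
Variables (K : fieldType) (n : nat).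
Local Notation sp := 'M[K]_(n.+1).

(* points x_0, ..., x_n (indexed by nat, only i <= n matter) in general position:
   every subset S of them spans a subspace of vector dimension |S|. *)
Definition gen_pos (x : nat -> sp) : Prop :=
  forall S : {set 'I_(n.+1)}, \rank (\sum_(i in S) x i)%MS = #|S|.

Definition Sigma (x : nat -> sp) (i : nat) : sp := (\sum_(j < i.+1) x j)%MS.
Definition pi_ (x : nat -> sp) (i : nat) : sp := (\sum_(1 <= j < i.+1) x j)%MS.

Variable m : nat.

(* Recursive construction, on the REVERSED ordered subset r = rev J = a :: b :: rest
   (a last, b second-to-last element of J); k is fuel (= size r). *)
Fixpoint recJ (x y : nat -> sp) (base : 'I_m -> sp) (k : nat) (r : seq 'I_m)
  {struct k} : sp :=
  match k with
  | 0 => 0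
  | k'.+1 =>
    match r with
    | [:: i] => base i
    | a :: b :: rest =>
        ((x (size r).+1 + recJ x y base k' (b :: rest)) :&:
         (y (size r).+1 + recJ x y base k' (a :: rest)))%MS
    | [::] => 0
    end
  end.

Definition ellJ (x y : nat -> sp) (ell : 'I_m -> sp) (J : seq 'I_m) : sp :=
  recJ x y ell (size J) (rev J).
Definition pJ (x y : nat -> sp) (ell : 'I_m -> sp) (J : seq 'I_m) : sp :=
  recJ x y (fun i => (ell i :&: pi_ x 2)%MS) (size J) (rev J).
End Defs.

(* Let e_i span the point x_i.  General position makes e_0, ..., e_n a basis,
   and after rescaling y_i = <e_(i-1) + c_i e_i> with c_i <> 0,
   l_a = <e_0 + s_a e_2, e_1 + t_a e_2> and p_a = <e_1 + t_a e_2> with the t_a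
   pairwise distinct.  By induction on |J|, l_J = <U_J, V_J> and p_J = <V_J>,
   where U_J - e_0 and V_J - e_1 lie in <e_2, ..., e_(|J|+1)>: each step
   intersects two planes whose sum has dimension 4 modulo <e_2, ..., e_(k-1)>,
   and the new coordinate of V_J on e_(|J|+1) is c_(|J|+1) times the difference
   of the two previous top coordinates, i.e. a nonzero multiple of t_b - t_a for
   the last two labels a, b of J.  Hence the coordinates of V_J determine J, and
   l_J meets pi_(|J|+1) exactly in <V_J> because U_J has coordinate 1 on e_0. *)

From HB Require Import structures.
From mathcomp Require Import all_boot all_order all_algebra zify ring.
Set Implicit Arguments.
Unset Strict Implicit.
Unset Printing Implicit Defensive.
Import GRing.Theory.
Local Open Scope ring_scope.

Lemma card_ord_range N lo hi :
  #|[pred i : 'I_N | lo <= i < hi]%N| = (minn hi N - lo)%N.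
Proof.
rewrite cardE /enum_mem size_filter -enumT.
rewrite (@eq_count _ _ (preim val (fun k => lo <= k < hi)%N)) //.
rewrite -count_map val_enum_ord; elim: N => [|N IH]; first by rewrite minn0.
rewrite -addn1 iotaD count_cat IH /= add0n addn0.
by case: (ltnP N hi) => ?; case: (leqP lo N) => ? /=; lia.
Qed.

Section RowSpaces.
Variables (K : fieldType) (N : nat).

Lemma eqmx_of_rank m1 m2 (A : 'M[K]_(m1, N)) (B : 'M_(m2, N)) :
  (A <= B)%MS -> (\rank B <= \rank A)%N -> (B :=: A)%MS.
Proof.
move=> sAB rBA; apply/eqmx_sym/eqmxP; rewrite -(mxrank_leqif_eq sAB).
by rewrite eqn_leq rBA mxrankS.
Qed.

Lemma capmx_eq_of_rank m1 m2 m3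
    (P : 'M[K]_(m1, N)) (Q : 'M_(m2, N)) (W : 'M_(m3, N)) :
    (W <= P :&: Q)%MS -> (\rank P + \rank Q <= \rank W + \rank (P + Q))%N ->
  (P :&: Q :=: W)%MS.
Proof. by move=> sW rPQ; apply: eqmx_of_rank sW _; have := mxrank_sum_cap P Q; lia. Qed.

Lemma rank_adds_le m1 m2 (A : 'M[K]_(m1, N)) (B : 'M_(m2, N)) a b :
  (\rank A <= a)%N -> (\rank B <= b)%N -> (\rank (A + B)%MS <= a + b)%N.
Proof. by move=> rA rB; apply: leq_trans (mxrank_adds_leqif A B) (leq_add rA rB). Qed.

Lemma submx_of_subr m (a b : 'rV[K]_N) (B : 'M_(m, N)) :
  (a <= B)%MS -> (a - b <= B)%MS -> (b <= B)%MS.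
Proof.
move=> sa sab; rewrite -[b](subKr a) addmx_sub //.
by rewrite eqmx_opp.
Qed.

Lemma subr_submx m (a b : 'rV[K]_N) (B : 'M_(m, N)) :
  (a <= B)%MS -> (b <= B)%MS -> (a - b <= B)%MS.
Proof. by move=> sa sb; rewrite addmx_sub // eqmx_opp. Qed.

Lemma sub_adds_rV (w u v : 'rV[K]_N) :
  (w <= u + v)%MS -> exists a b, w = a *: u + b *: v.
Proof.
case/sub_addsmxP=> [[a b] /= ->]; exists (a 0 0), (b 0 0).
by rewrite {1}(mx11_scalar a) {1}(mx11_scalar b) !mul_scalar_mx.
Qed.

Lemma sub_adds3_rV (w u v z : 'rV[K]_N) :
  (w <= u + (v + z))%MS -> exists a b c, w = a *: u + b *: v + c *: z.
Proof.
case/sub_addsmxP=> [[a B] /= ->]; have /sub_adds_rV[b [c ->]] := submxMl B (v + z)%MS.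
by exists (a 0 0), b, c; rewrite addrA {1}(mx11_scalar a) mul_scalar_mx.
Qed.

Lemma rank1_nz_row m (A : 'M[K]_(m, N)) : \rank A = 1%N -> (A :=: nz_row A)%MS.
Proof.
move=> rA; apply: eqmx_of_rank; first exact: nz_row_sub.
by rewrite rank_rV rA nz_row_eq0 -mxrank_eq0 rA.
Qed.

Lemma eq_rank1 m1 m2 (A : 'M[K]_(m1, N)) (B : 'M_(m2, N)) :
  \rank A = 1%N -> \rank B = 1%N -> (A <= B)%MS -> (A == B)%MS.
Proof. by move=> rA rB sAB; apply/eqmxP/eqmx_sym/eqmx_of_rank; rewrite ?rA ?rB. Qed.

Lemma point_on_line m (Y : 'M[K]_(m, N)) (u v : 'rV[K]_N) :
    \rank Y = 1%N -> v != 0 -> (Y <= u + v)%MS -> ~~ (Y == v)%MS ->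
  exists a, (Y :=: (u + a *: v)%R)%MS.
Proof.
move=> rY v0 sY Yv; have eY := rank1_nz_row rY.
have [a [b wE]] : exists a b, nz_row Y = a *: u + b *: v by apply: sub_adds_rV; rewrite -eY.
have a0 : a != 0.
  apply: contraNneq Yv => a0; apply: eq_rank1; rewrite ?rY ?rank_rV ?v0 //.
  by rewrite eY wE a0 scale0r add0r scalemx_sub.
exists (b / a); apply: eqmx_trans eY _.
apply: eqmx_trans (eqmx_sym (eqmx_scale _ (invr_neq0 a0))) _.
have -> : a^-1 *: nz_row Y = u + (b / a) *: v.
  by rewrite wE scalerDr !scalerA mulVf // scale1r mulrC.
exact: eqmx_refl.
Qed.

End RowSpaces.

Section Spans.
Variables (K : fieldType) (n : nat) (e : nat -> 'rV[K]_n.+1).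
Local Notation N := n.+1.

Definition span lo hi : 'M[K]_N := (\sum_(i < N | (lo <= i < hi)%N) <<e i>>)%MS.

Lemma sub_span lo hi i : (lo <= i < hi)%N -> (i < N)%N -> (e i <= span lo hi)%MS.
Proof. by move=> hi_i iN; apply: (sumsmx_sup (Ordinal iN)); rewrite ?genmxE. Qed.

Lemma span_subP lo hi m (B : 'M_(m, N)) :
  (forall i, (lo <= i < hi)%N -> (i < N)%N -> (e i <= B)%MS) -> (span lo hi <= B)%MS.
Proof. by move=> sB; apply/sumsmx_subP => i /sB; rewrite genmxE; apply. Qed.

Lemma span_mono lo hi lo' hi' :
  (lo' <= lo)%N -> (hi <= hi')%N -> (span lo hi <= span lo' hi')%MS.
Proof. by move=> ? ?; apply: span_subP => i ? ?; apply: sub_span => //; lia. Qed.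

(* [v - e j <= span 2 h] says that v is e_j plus a combination of
   e_2, ..., e_(h-1); the lemmas named normal_* are about such vectors. *)
Lemma normal_step j h (w : 'rV[K]_N) b :
  (2 <= h < N)%N -> (w - e j <= span 2 h)%MS -> ((w + b *: e h - e j)%R <= span 2 h.+1)%MS.
Proof.
move=> hN sw; rewrite addrAC; apply: addmx_sub; first by rewrite (submx_trans sw) ?span_mono.
by apply/scalemx_sub/sub_span; lia.
Qed.

Lemma step_gen_sub k a (v : 'rV[K]_N) vb va :
  ((v + vb *: e k + (a * (vb - va)) *: e k.+1)%R <= e k.+1 + (v + vb *: e k)%R)%MS /\
  ((v + vb *: e k + (a * (vb - va)) *: e k.+1)%R <=
     (e k + a *: e k.+1)%R + (v + va *: e k)%R)%MS.
Proof.
split; first by rewrite addmx_sub ?addsmxSr ?scalemx_sub ?addsmxSl.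
have -> : v + vb *: e k + (a * (vb - va)) *: e k.+1
          = v + va *: e k + (vb - va) *: (e k + a *: e k.+1).
  by apply/matrixP => i j; rewrite !mxE; ring.
by rewrite addmx_sub ?addsmxSr ?scalemx_sub ?addsmxSl.
Qed.

Hypothesis rank_span : forall lo hi, (lo <= hi <= N)%N -> \rank (span lo hi) = (hi - lo)%N.

Lemma rank_span_le lo hi : (\rank (span lo hi) <= hi - lo)%N.
Proof.
have span0 lo' hi' : (hi' < lo')%N -> span lo' hi' = 0.
  by move=> ?; rewrite /span big_pred0 // => i; apply/negbTE; lia.
wlog hiN : hi / (hi <= N)%N => [hyp|].
  have [/hyp//|Nhi] := leqP hi N.
  have -> : span lo hi = span lo N by apply: eq_bigl => i; have := ltn_ord i; lia.
  by apply: leq_trans (hyp N _) _ => //; lia.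
have [lohi|hilo] := leqP lo hi; first by rewrite rank_span ?lohi.
by rewrite span0 ?mxrank0.
Qed.

Lemma rank_span_sub_adds lo hi m1 m2 (A : 'M_(m1, N)) (B : 'M_(m2, N)) :
  (lo <= hi <= N)%N -> (span lo hi <= A + B)%MS -> (hi - lo <= \rank A + \rank B)%N.
Proof.
move=> lohi sAB; rewrite -rank_span //.
exact: leq_trans (mxrankS sAB) (mxrank_adds_leqif A B).
Qed.

Lemma e_notin_span_above i hi : (i < hi <= N)%N -> ~~ (e i <= span i.+1 hi)%MS.
Proof.
move=> ihi; apply/negP => sei.
have : (span i hi <= span i.+1 hi)%MS.
  apply: span_subP => j ? ?; have [->|?] := eqVneq j i; first by [].
  by rewrite sub_span //; lia.
by move/mxrankS; rewrite !rank_span; lia.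
Qed.

Lemma e_notin_span_below lo i : (lo <= i < N)%N -> ~~ (e i <= span lo i)%MS.
Proof.
move=> loi; apply/negP => sei.
have : (span lo i.+1 <= span lo i)%MS.
  apply: span_subP => j ? ?; have [->|?] := eqVneq j i; first by [].
  by rewrite sub_span //; lia.
by move/mxrankS; rewrite !rank_span; lia.
Qed.

Lemma normal_top_eq h (v w : 'rV[K]_N) (a b : K) :
    (2 <= h < N)%N -> (v - e 1 <= span 2 h)%MS -> (w - e 1 <= span 2 h)%MS ->
  (v + a *: e h)%R = (w + b *: e h)%R -> a = b /\ v = w.
Proof.
move=> hN sv sw vw; suff ab : a = b by split; last by move: vw; rewrite ab => /addIr.
apply: contraNeq (e_notin_span_below hN) => ab.
rewrite -(eqmx_scale _ (_ : a - b != 0)) ?subr_eq0 //.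
have -> : (a - b) *: e h = (w - e 1) - (v - e 1).
  have -> : w = v + a *: e h - b *: e h by rewrite vw addrK.
  by apply/matrixP => i j; rewrite !mxE; ring.
exact: subr_submx.
Qed.

Hypothesis n_gt0 : (0 < n)%N.

Lemma rank_pair (u v : 'rV[K]_N) :
  (u - e 0 <= span 2 N)%MS -> (v - e 1 <= span 2 N)%MS -> \rank (u + v)%MS = 2%N.
Proof.
move=> su sv; apply/eqP; rewrite eqn_leq (rank_adds_le (rank_leq_row u) (rank_leq_row v)) /=.
have : (span 0 N <= (u + v) + span 2 N)%MS.
  apply: span_subP => -[|[|i]] _ iN; last by rewrite (submx_trans _ (addsmxSr _ _)) ?sub_span.
  - apply: (submx_of_subr (a := u)); first by rewrite -addsmxA addsmxSl.
    exact: submx_trans su (addsmxSr _ _).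
  - apply: (submx_of_subr (a := v)); last exact: submx_trans sv (addsmxSr _ _).
    by rewrite (submx_trans (addsmxSr u v)) ?addsmxSl.
move/(@rank_span_sub_adds 0 N _ _ _ _ (leqnn N)); have := rank_span_le 2 N; have := n_gt0; lia.
Qed.

Lemma rank_normal (v : 'rV[K]_N) : (v - e 1 <= span 2 N)%MS -> \rank v = 1%N.
Proof.
move=> sv; rewrite rank_rV; suff -> : v != 0 by [].
apply: contraNneq (e_notin_span_above (i := 1) (hi := N) _) => [v0|]; last by lia.
by move: sv; rewrite v0 sub0r eqmx_opp.
Qed.

Lemma normal_sub_span h (v : 'rV[K]_N) :
  (1 < h <= N)%N -> (v - e 1 <= span 2 h)%MS -> (v <= span 1 h)%MS.
Proof.
move=> hN sv; apply: (submx_of_subr (a := e 1)); first by rewrite sub_span //; lia.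
by rewrite -opprB eqmx_opp (submx_trans sv) ?span_mono.
Qed.

Lemma capmx_pair_sub (u v : 'rV[K]_N) m (S : 'M_(m, N)) :
    (u - e 0 <= span 2 N)%MS -> (v - e 1 <= span 2 N)%MS ->
    (v <= S)%MS -> (S <= span 1 N)%MS ->
  ((u + v) :&: S :=: v)%MS.
Proof.
move=> su sv vS S1; apply/eqmxP; rewrite sub_capmx addsmxSr vS andbT.
suff <- : ((u + v) :&: span 1 N :=: v)%MS by rewrite capmxS.
apply: capmx_eq_of_rank; first by rewrite sub_capmx addsmxSr normal_sub_span //; lia.
rewrite (rank_pair su sv) (rank_normal sv) rank_span; last by lia.
suff /mxrankS : (span 0 N <= (u + v) + span 1 N)%MS by rewrite rank_span //; lia.
apply: span_subP => -[|i] _ iN; last by rewrite (submx_trans _ (addsmxSr _ _)) ?sub_span.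
apply: (submx_of_subr (a := u)); first by rewrite -addsmxA addsmxSl.
by rewrite (submx_trans su) // (submx_trans _ (addsmxSr _ _)) ?span_mono.
Qed.

Lemma normal_eq_of_sub (v w : 'rV[K]_N) :
  (v - e 1 <= span 2 N)%MS -> (w - e 1 <= span 2 N)%MS -> (v <= w)%MS -> v = w.
Proof.
move=> sv sw /sub_rVP [a va]; rewrite va in sv *.
have [->|a1] := eqVneq a 1; first by rewrite scale1r.
have : ((1 - a) *: e 1 <= span 2 N)%MS.
  have -> : (1 - a) *: e 1 = a *: (w - e 1) - (a *: w - e 1).
    by apply/matrixP => i j; rewrite !mxE; ring.
  by apply: subr_submx => //; apply: scalemx_sub.
rewrite eqmx_scale ?subr_eq0 1?eq_sym // => se1.
by exfalso; move: se1; apply/negP/e_notin_span_above; lia.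
Qed.

Lemma capmx_step k a (u v : 'rV[K]_N) (ub ua vb va : K) :
    (2 <= k < n)%N -> (u - e 0 <= span 2 k)%MS -> (v - e 1 <= span 2 k)%MS ->
  ((e k.+1 + ((u + ub *: e k)%R + (v + vb *: e k)%R)) :&:
   ((e k + a *: e k.+1)%R + ((u + ua *: e k)%R + (v + va *: e k)%R))
  :=: (u + ub *: e k + (a * (ub - ua)) *: e k.+1)%R
    + (v + vb *: e k + (a * (vb - va)) *: e k.+1)%R)%MS.
Proof.
move=> kn su sv; have kN : (2 <= k < N)%N by lia.
have k1N : (2 <= k.+1 < N)%N by lia.
have k2N : (k.+2 <= N)%N by lia.
have su1 := normal_step ub kN su; have sv1 := normal_step vb kN sv.
set P := (e k.+1 + _)%MS; set Q := (_ + (_ + _))%MS.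
have [uP uQ] := step_gen_sub k a u ub ua; have [vP vQ] := step_gen_sub k a v vb va.
apply: capmx_eq_of_rank.
  rewrite sub_capmx !addsmx_sub -!andbA; apply/and4P; split.
  - exact: submx_trans uP (addsmxS (submx_refl _) (addsmxSl _ _)).
  - exact: submx_trans vP (addsmxS (submx_refl _) (addsmxSr _ _)).
  - exact: submx_trans uQ (addsmxS (submx_refl _) (addsmxSl _ _)).
  - exact: submx_trans vQ (addsmxS (submx_refl _) (addsmxSr _ _)).
have rP : (\rank P <= 1 + (1 + 1))%N by rewrite !rank_adds_le ?rank_leq_row.
have rQ : (\rank Q <= 1 + (1 + 1))%N by rewrite !rank_adds_le ?rank_leq_row.
rewrite rank_pair; last 2 first.
- exact: submx_trans (normal_step _ k1N su1) (span_mono (leqnn 2) k2N).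
- exact: submx_trans (normal_step _ k1N sv1) (span_mono (leqnn 2) k2N).
(* P + Q contains e_k and e_(k+1), and e_0, e_1 modulo span 2 k. *)
set T := ((P + Q) + span 2 k)%MS.
suff /rank_span_sub_adds : (span 0 k.+2 <= T)%MS.
  by move/(_ _); have := rank_span_le 2 k; lia.
have PT : (P <= T)%MS by rewrite (submx_trans (addsmxSl P Q)) ?addsmxSl.
have QT : (Q <= T)%MS by rewrite (submx_trans (addsmxSr P Q)) ?addsmxSl.
have ek1T : (e k.+1 <= T)%MS by rewrite (submx_trans _ PT) ?addsmxSl.
have ekT : (e k <= T)%MS.
  apply: (submx_of_subr (a := (e k + a *: e k.+1)%R)).
    by rewrite (submx_trans _ QT) ?addsmxSl.
  by rewrite addrAC subrr add0r scalemx_sub.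
have span2T : (span 2 k.+2 <= T)%MS.
  apply: span_subP => i /andP[i2 ik2] _; have [ik|ki] := ltnP i k.
    by rewrite (submx_trans _ (addsmxSr _ _)) // sub_span ?i2 //; clear -ik kN; lia.
  by have [->|->] : i = k \/ i = k.+1 by clear -ki ik2; lia.
apply: span_subP => -[|[|i]] ? ?; last by rewrite (submx_trans _ span2T) ?sub_span.
- apply: (submx_of_subr (a := (u + ub *: e k)%R)).
    by rewrite (submx_trans _ PT) // (submx_trans _ (addsmxSr _ _)) ?addsmxSl.
  exact: submx_trans su1 (submx_trans (span_mono (leqnn 2) (leqnSn _)) span2T).
- apply: (submx_of_subr (a := (v + vb *: e k)%R)).
    by rewrite (submx_trans _ PT) // (submx_trans _ (addsmxSr _ _)) ?addsmxSr.
  exact: submx_trans sv1 (submx_trans (span_mono (leqnn 2) (leqnSn _)) span2T).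
Qed.

Lemma capmx_step_point k a (v : 'rV[K]_N) (vb va : K) :
    (2 <= k < n)%N -> (v - e 1 <= span 2 k)%MS ->
  ((e k.+1 + (v + vb *: e k)%R) :&: ((e k + a *: e k.+1)%R + (v + va *: e k)%R)
  :=: (v + vb *: e k + (a * (vb - va)) *: e k.+1)%R)%MS.
Proof.
move=> kn sv; set w := (v + _ + _)%R; set S := (_ :&: _)%MS.
have [wP wQ] := step_gen_sub k a v vb va.
have sw : (w - e 1 <= span 2 N)%MS.
  by rewrite (submx_trans _ (span_mono (leqnn 2) (_ : k.+2 <= N)%N)) ?normal_step //; lia.
have wS : (w <= S)%MS by rewrite sub_capmx wP wQ.
have svk : ((v + vb *: e k)%R - e 1 <= span 2 N)%MS.
  by rewrite (submx_trans (@normal_step 1 k v vb _ sv)) ?span_mono //; lia.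
have S1 : (S <= span 1 N)%MS.
  by rewrite (submx_trans (capmxSl _ _)) // addsmx_sub sub_span ?(normal_sub_span _ svk) //; lia.
(* The line case with u := e 0, cut down to span 1 N. *)
have e00 : (e 0 - e 0 <= span 2 k)%MS by rewrite subrr sub0mx.
have line := @capmx_step k a (e 0) v 0 0 vb va kn e00 sv.
rewrite subrr mulr0 !scale0r !addr0 in line.
have := capmx_pair_sub (u := e 0) (S := S) _ sw wS S1; rewrite subrr sub0mx => /(_ isT) wE.
apply/eqmxP; rewrite wS andbT -wE sub_capmx submx_refl andbT -line.
by rewrite capmxS ?addsmxS ?addsmxSr.
Qed.

End Spans.

Section Construction.
Variables (K : fieldType) (n : nat) (e : nat -> 'rV[K]_n.+1) (c : nat -> K).
Local Notation N := n.+1.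
Local Notation span := (span e).
Hypothesis rank_span : forall lo hi, (lo <= hi <= N)%N -> \rank (span lo hi) = (hi - lo)%N.
Hypothesis n_ge2 : (2 <= n)%N.
Hypothesis c_neq0 : forall i, (3 <= i <= n)%N -> c i != 0.
Let n_gt0 : (0 < n)%N := ltnW n_ge2.

Fixpoint cprod k : K := if k is k'.+1 then - c k'.+4 * cprod k' else c 3.

Lemma cprod_neq0 k : (k.+2 < n)%N -> cprod k != 0.
Proof.
elim: k => [|k IH] kn /=; first by rewrite c_neq0 //; lia.
by rewrite mulf_neq0 ?oppr_eq0 ?c_neq0 ?IH //; lia.
Qed.

Variable m : nat.

(* Closed form of the recurrence [coef_cons2]; it depends only on the first two
   entries of r, which in [recJ] are the last two labels of J. *)
Definition coef (u : 'I_m -> K) (r : seq 'I_m) : K :=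
  match r with
  | [::] => 0
  | [:: a] => u a
  | a :: b :: r' => cprod (size r') * (u b - u a)
  end.

Fixpoint gen (v0 : 'rV[K]_N) (u : 'I_m -> K) (r : seq 'I_m) : 'rV[K]_N :=
  if r is a :: r' then (gen v0 u r' + coef u r *: e (size r').+2)%R else v0.

Lemma gen_cons v0 u a r :
  gen v0 u (a :: r) = (gen v0 u r + coef u (a :: r) *: e (size r).+2)%R.
Proof. by []. Qed.

Lemma coef_cons2 u a b r :
  coef u [:: a, b & r] = c (size r).+3 * (coef u (b :: r) - coef u (a :: r)).
Proof. by case: r => [|d r] /=; ring. Qed.

Lemma coef_neq0 u a b r :
  injective u -> uniq [:: a, b & r] -> ((size r).+2 < n)%N -> coef u [:: a, b & r] != 0.
Proof.
move=> u_inj /andP[abr _] rn; rewrite mulf_neq0 ?cprod_neq0 // subr_eq0.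
by apply: contraNneq abr => /u_inj ->; rewrite mem_head.
Qed.

Lemma gen_normal j u r :
  ((size r).+1 <= n)%N -> (gen (e j) u r - e j <= span 2 (size r).+2)%MS.
Proof.
elim: r => [|a r IH] /= rn; first by rewrite subrr sub0mx.
by apply: normal_step (IH _); lia.
Qed.

Variables (s t : 'I_m -> K).
Definition genU r := gen (e 0) s r.
Definition genV r := gen (e 1) t r.

Variables (x y : nat -> 'M[K]_N) (ell : 'I_m -> 'M[K]_N).
Hypothesis x_e : forall i, (i <= n)%N -> (x i :=: e i)%MS.
Hypothesis y_e : forall i, (3 <= i <= n)%N -> (y i :=: (e i.-1 + c i *: e i)%R)%MS.
Hypothesis ell_e : forall a, (ell a :=: (e 0 + s a *: e 2)%R + (e 1 + t a *: e 2)%R)%MS.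
Hypothesis p_e : forall a, (ell a :&: pi_ x 2 :=: (e 1 + t a *: e 2)%R)%MS.

Lemma recJ_cons2 (base : 'I_m -> 'M[K]_N) a b r :
  recJ x y base (size [:: a, b & r]) [:: a, b & r] =
  ((x (size r).+3 + recJ x y base (size (b :: r)) (b :: r)) :&:
   (y (size r).+3 + recJ x y base (size (a :: r)) (a :: r)))%MS.
Proof. by []. Qed.

Lemma recJ_ell r : (0 < size r < n)%N -> (recJ x y ell (size r) r :=: genU r + genV r)%MS.
Proof.
move: {2}(size r) (leqnn (size r)) => k.
elim: k r => [|k IH] [|a [|b r]] // rk rn; first exact: ell_e.
rewrite /= in rk rn; rewrite recJ_cons2.
apply: eqmx_trans (cap_eqmx (adds_eqmx (x_e _) (IH (b :: r) _ _))
                            (adds_eqmx (y_e _) (IH (a :: r) _ _))) _; rewrite /= ?ltnS //; try lia.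
rewrite /genU /genV !gen_cons !coef_cons2.
by apply: capmx_step; rewrite ?gen_normal //; lia.
Qed.

Lemma recJ_p r : (0 < size r < n)%N ->
  (recJ x y (fun a => ell a :&: pi_ x 2)%MS (size r) r :=: genV r)%MS.
Proof.
move: {2}(size r) (leqnn (size r)) => k.
elim: k r => [|k IH] [|a [|b r]] // rk rn; first exact: p_e.
rewrite /= in rk rn; rewrite recJ_cons2.
apply: eqmx_trans (cap_eqmx (adds_eqmx (x_e _) (IH (b :: r) _ _))
                            (adds_eqmx (y_e _) (IH (a :: r) _ _))) _; rewrite /= ?ltnS //; try lia.
rewrite /genV !gen_cons !coef_cons2.
by apply: capmx_step_point; rewrite ?gen_normal //; lia.
Qed.

Lemma capmx_gen_span r h : (0 < size r < n)%N -> ((size r).+2 <= h <= N)%N ->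
  ((genU r + genV r) :&: span 1 h :=: genV r)%MS.
Proof.
move=> rn hN; have rn' : ((size r).+1 <= n)%N by lia.
have sU : (genU r - e 0 <= span 2 (size r).+2)%MS := gen_normal 0 s rn'.
have sV : (genV r - e 1 <= span 2 (size r).+2)%MS := gen_normal 1 t rn'.
apply: (capmx_pair_sub rank_span n_gt0).
- by rewrite (submx_trans sU) // span_mono //; lia.
- by rewrite (submx_trans sV) // span_mono //; lia.
- by apply: normal_sub_span; rewrite ?(submx_trans sV) ?span_mono //; lia.
- by rewrite span_mono //; lia.
Qed.

Lemma pi_span h : (h <= n)%N -> (pi_ x h :=: span 1 h.+1)%MS.
Proof.
move=> hn; rewrite /pi_ (big_nat_widen _ _ _ _ _ (_ : h.+1 <= N)%N) // big_geq_mkord.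
rewrite (eq_bigl (fun i : 'I_N => 1 <= i < h.+1)%N) => [|i]; last by lia.
apply: eqmx_sums => i /andP[_ ih]; apply: eqmx_trans (x_e _) (eqmx_sym (genmxE _)); lia.
Qed.

Lemma gen_rev_normal j u (J : seq 'I_m) :
  (1 <= size J <= n - 1)%N -> (gen (e j) u (rev J) - e j <= span 2 N)%MS.
Proof.
move=> Jn; have rn : ((size (rev J)).+1 <= n)%N by rewrite size_rev; lia.
apply: submx_trans (gen_normal j u rn) _.
by apply: span_mono; rewrite ?size_rev; lia.
Qed.

Lemma ellJE (J : seq 'I_m) :
  (1 <= size J <= n - 1)%N -> (ellJ x y ell J :=: genU (rev J) + genV (rev J))%MS.
Proof. by move=> Jn; rewrite /ellJ -size_rev; apply: recJ_ell; rewrite size_rev; lia. Qed.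

Lemma pJE (J : seq 'I_m) : (1 <= size J <= n - 1)%N -> (pJ x y ell J :=: genV (rev J))%MS.
Proof. by move=> Jn; rewrite /pJ -size_rev; apply: recJ_p; rewrite size_rev; lia. Qed.

Lemma capmx_ellJ_span (J : seq 'I_m) h :
    (1 <= size J <= n - 1)%N -> ((size J).+2 <= h <= N)%N ->
  (ellJ x y ell J :&: span 1 h :=: pJ x y ell J)%MS.
Proof.
move=> Jn hN; apply: eqmx_trans (cap_eqmx (ellJE Jn) (eqmx_refl _)) _.
by apply: eqmx_trans (capmx_gen_span _ _) (eqmx_sym (pJE Jn)); rewrite size_rev; lia.
Qed.

Lemma ellJ_pJ_spec (J : seq 'I_m) : (1 <= size J <= n - 1)%N ->
  [/\ \rank (ellJ x y ell J) = 2%N, \rank (pJ x y ell J) = 1%N &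
      ((ellJ x y ell J :&: pi_ x (size J).+1) == pJ x y ell J)%MS].
Proof.
move=> Jn; have sU := gen_rev_normal 0 s Jn; have sV := gen_rev_normal 1 t Jn.
split.
- by rewrite (ellJE Jn) (rank_pair rank_span n_gt0 sU sV).
- by rewrite (pJE Jn) (rank_normal rank_span n_gt0 sV).
apply/eqmxP; apply: eqmx_trans (cap_eqmx (eqmx_refl _) (pi_span _)) (capmx_ellJ_span Jn _); lia.
Qed.

Hypothesis t_inj : injective t.

Lemma coef_cons_inj a1 a2 r :
  ((size r).+2 <= n)%N -> coef t (a1 :: r) = coef t (a2 :: r) -> a1 = a2.
Proof.
case: r => [|b r] /= rn; first exact: t_inj.
by move/(mulfI (cprod_neq0 _))/addrI/oppr_inj/t_inj; apply; lia.
Qed.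

Lemma genV_neq_size (r1 r : seq 'I_m) (a b : 'I_m) :
    uniq [:: a, b & r] -> (0 < size r1 < (size r).+2)%N -> ((size r).+2 < n)%N ->
  genV r1 != genV [:: a, b & r].
Proof.
move=> ur r12 rn; apply/eqP => eq12.
suff /esym/eqP : 0 = coef t [:: a, b & r] by rewrite (negbTE (coef_neq0 t_inj ur rn)).
apply: (proj1 (@normal_top_eq K n e rank_span (size r).+3 (genV r1) (genV (b :: r))
                 0 (coef t [:: a, b & r]) _ _ _ _)).
- by lia.
- apply: submx_trans (gen_normal 1 t (_ : (size r1).+1 <= n)%N) _; first by lia.
  by apply: span_mono; lia.
- by apply: (gen_normal 1 t (r := b :: r)) => /=; lia.
- by rewrite scale0r addr0 eq12.
Qed.

Lemma genV_inj_size (r1 r2 : seq 'I_m) :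
  uniq r1 -> uniq r2 -> size r1 = size r2 -> (size r2 < n)%N -> genV r1 = genV r2 -> r1 = r2.
Proof.
elim: r1 r2 => [|a1 r1 IH] [|a2 r2] // /andP[_ u1] /andP[_ u2] [sz] rn eq12.
rewrite /= in rn.
have [] := @normal_top_eq K n e rank_span (size r2).+2 (genV r1) (genV r2)
             (coef t (a1 :: r1)) (coef t (a2 :: r2)).
- by lia.
- by rewrite -sz; apply: gen_normal; lia.
- by apply: gen_normal; lia.
- by move: eq12; rewrite /genV !gen_cons sz.
move=> c12 /(IH r2 u1 u2 sz (ltnW rn)) r12; rewrite r12 in c12 *.
by rewrite (coef_cons_inj _ c12) //; lia.
Qed.

Lemma genV_inj (r1 r2 : seq 'I_m) :
    uniq r1 -> uniq r2 -> (0 < size r1 < n)%N -> (0 < size r2 < n)%N ->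
  genV r1 = genV r2 -> r1 = r2.
Proof.
wlog r12 : r1 r2 / (size r1 <= size r2)%N => [hyp u1 u2 r1n r2n eq12|].
  have [le|/ltnW le] := leqP (size r1) (size r2); first exact: hyp.
  by rewrite (hyp _ _ le u2 u1 r2n r1n (esym eq12)).
move=> u1 u2 r1n r2n eq12; have [lt12|gt12|eq_sz] := ltngtP (size r1) (size r2); last 2 first.
- by lia.
- by apply: genV_inj_size => //; lia.
case: r2 u2 lt12 r2n eq12 {r12} => [|a [|b r]] u2 lt12 r2n eq12; rewrite /= in lt12 r2n; try by lia.
by move/eqP: eq12; rewrite (negbTE (genV_neq_size u2 _ _)) //; lia.
Qed.

Lemma pJ_inj (J1 J2 : seq 'I_m) :
    uniq J1 -> uniq J2 -> (1 <= size J1 <= n - 1)%N -> (1 <= size J2 <= n - 1)%N ->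
  (pJ x y ell J1 == pJ x y ell J2)%MS -> J1 = J2.
Proof.
move=> u1 u2 J1n J2n /andP[+ _]; rewrite (pJE J1n) (pJE J2n) => V12.
apply/(can_inj revK)/genV_inj; rewrite ?rev_uniq ?size_rev //; try lia.
exact: (normal_eq_of_sub rank_span n_gt0 (gen_rev_normal 1 t J1n) (gen_rev_normal 1 t J2n) V12).
Qed.

Lemma pJ_eq_of_ellJ_eq (J1 J2 : seq 'I_m) :
    (1 <= size J1 <= n - 1)%N -> (1 <= size J2 <= n - 1)%N ->
  (ellJ x y ell J1 == ellJ x y ell J2)%MS -> (pJ x y ell J1 == pJ x y ell J2)%MS.
Proof.
move=> J1n J2n /eqmxP E12; apply/eqmxP.
have J1N : ((size J1).+2 <= N <= N)%N by lia.
have J2N : ((size J2).+2 <= N <= N)%N by lia.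
apply: eqmx_trans (eqmx_sym (capmx_ellJ_span J1n J1N)) _.
exact: eqmx_trans (cap_eqmx E12 (eqmx_refl _)) (capmx_ellJ_span J2n J2N).
Qed.

Lemma ellJ_pJ_inj (J1 J2 : seq 'I_m) :
    uniq J1 -> uniq J2 -> (1 <= size J1 <= n - 1)%N -> (1 <= size J2 <= n - 1)%N ->
    J1 != J2 ->
  ~~ (ellJ x y ell J1 == ellJ x y ell J2)%MS /\ ~~ (pJ x y ell J1 == pJ x y ell J2)%MS.
Proof.
move=> u1 u2 J1n J2n J12; have p_inj := pJ_inj u1 u2 J1n J2n.
split; apply: contraNN J12 => E; apply/eqP/p_inj => //.
exact: pJ_eq_of_ellJ_eq.
Qed.

End Construction.

Lemma rank_span_gen_pos (K : fieldType) n (x : nat -> 'M[K]_n.+1) (e : nat -> 'rV[K]_n.+1) :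
    gen_pos x -> (forall i, (i <= n)%N -> (x i :=: e i)%MS) ->
  forall lo hi, (lo <= hi <= n.+1)%N -> \rank (span e lo hi) = (hi - lo)%N.
Proof.
move=> gp x_e lo hi lohi; have := gp [set i : 'I_n.+1 | lo <= i < hi]%N.
rewrite cardsE card_ord_range (minn_idPl _) => [<-|]; last by lia.
rewrite (eq_bigl (fun i : 'I_n.+1 => lo <= i < hi)%N) => [|i]; last by rewrite inE.
apply/eqmx_rank/eqmxP; apply: eqmx_sums => i _.
by apply: eqmx_trans (genmxE _) (eqmx_sym (x_e i (ltn_ord i))).
Qed.

Lemma pi2E (K : fieldType) n (x : nat -> 'M[K]_n.+1) : pi_ x 2 = (x 1%N + x 2%N)%MS.
Proof. by rewrite /pi_ big_ltn // big_nat1. Qed.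

Lemma Sigma2E (K : fieldType) n (x : nat -> 'M[K]_n.+1) :
  Sigma x 2 = (x 0%N + (x 1%N + x 2%N))%MS.
Proof. by rewrite /Sigma -(big_mkord xpredT) big_ltn // big_ltn // big_nat1. Qed.

Section NormalForms.
Variables (K : fieldType) (n : nat) (x : nat -> 'M[K]_n.+1) (e : nat -> 'rV[K]_n.+1).
Hypothesis x_e : forall i, (i <= n)%N -> (x i :=: e i)%MS.
Hypothesis e_neq0 : forall i, (i <= n)%N -> e i != 0.

Lemma y_normal_form (Y : 'M[K]_n.+1) i :
    (1 <= i <= n)%N ->
    [/\ \rank Y = 1%N, (Y <= x i.-1 + x i)%MS, ~~ (Y == x i.-1)%MS & ~~ (Y == x i)%MS] ->
  exists a : K, (a != 0) && (Y == (e i.-1 + a *: e i)%R)%MS.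
Proof.
move=> i_n [rY sY Yx1 Yx]; have i1n : (i.-1 <= n)%N by lia.
have in_ : (i <= n)%N by lia.
have sY' : (Y <= e i.-1 + e i)%MS by rewrite -(adds_eqmx (x_e i1n) (x_e in_)).
have Yx' : ~~ (Y == e i)%MS.
  by apply: contra Yx => /eqmxP YE; apply/eqmxP/(eqmx_trans YE)/eqmx_sym/x_e.
have [a Ya] := point_on_line rY (e_neq0 in_) sY' Yx'.
exists a; apply/andP; split; last exact/eqmxP.
apply: contraNneq Yx1 => a0; apply/eqmxP/(eqmx_trans Ya).
by rewrite a0 scale0r addr0; apply/eqmx_sym/x_e.
Qed.

Lemma y_coefs (y : nat -> 'M[K]_n.+1) :
    (forall i, (3 <= i <= n)%N ->
       [/\ \rank (y i) = 1%N, (y i <= x i.-1 + x i)%MS,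
           ~~ (y i == x i.-1)%MS & ~~ (y i == x i)%MS]) ->
  exists c : nat -> K,
    (forall i, (3 <= i <= n)%N -> c i != 0) /\
    (forall i, (3 <= i <= n)%N -> (y i :=: (e i.-1 + c i *: e i)%R)%MS).
Proof.
move=> hy.
have yc i : exists a : K, (3 <= i <= n)%N ==> (a != 0) && (y i == (e i.-1 + a *: e i)%R)%MS.
  have [i_n|] := boolP (3 <= i <= n)%N; last by exists 0.
  by apply: (y_normal_form _ (hy i i_n)); lia.
exists (fun i => xchoose (yc i)).
by split=> i i_n; have /implyP/(_ i_n)/andP[? /eqmxP] := xchooseP (yc i).
Qed.

Hypothesis rank_span :
  forall lo hi, (lo <= hi <= n.+1)%N -> \rank (span e lo hi) = (hi - lo)%N.
Hypothesis n_ge2 : (2 <= n)%N.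

Lemma line_normal_form m (L : 'M[K]_(m, n.+1)) (t : K) :
    \rank L = 2%N -> (L <= e 0 + (e 1 + e 2))%MS ->
    (L :&: (e 1 + e 2) :=: (e 1 + t *: e 2)%R)%MS ->
  exists s, (L :=: (e 0 + s *: e 2)%R + (e 1 + t *: e 2)%R)%MS.
Proof.
move=> rL sL pL; set p := (e 1 + t *: e 2)%R.
have pL' : (p <= L)%MS by rewrite -pL capmxSl.
have /row_subPn[i wL] : ~~ (L <= e 1 + e 2)%MS.
  by apply/negP => /capmx_idPl LE; have := rank_leq_row p; rewrite -pL LE rL.
have [b0 [z1 [z2 wE]]] := sub_adds3_rV (submx_trans (row_sub i L) sL).
have b0_0 : b0 != 0.
  apply: contraNneq wL => b0_0.
  by rewrite wE b0_0 scale0r add0r addmx_sub_adds ?scalemx_sub.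
exists (b0^-1 * (z2 - z1 * t)); set u := (e 0 + _ *: e 2)%R.
have uL : (u <= L)%MS.
  have -> : u = b0^-1 *: (row i L - z1 *: p).
    by rewrite wE; apply/matrixP => ? ?; rewrite !mxE; field.
  by apply/scalemx_sub/subr_submx; rewrite ?row_sub ?scalemx_sub.
apply: eqmx_of_rank; first by rewrite addsmx_sub uL.
rewrite rL (rank_pair rank_span (ltnW n_ge2)) //.
- by rewrite /u addrAC subrr add0r scalemx_sub // sub_span //; lia.
by rewrite /p addrAC subrr add0r scalemx_sub // sub_span //; lia.
Qed.


Lemma ell_normal_form (L : 'M[K]_n.+1) :
    \rank L = 2%N -> (L <= Sigma x 2)%MS -> \rank (L :&: pi_ x 2)%MS = 1%N ->
    ~~ ((L :&: pi_ x 2) == x 2%N)%MS ->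
  exists st : K * K, (L == (e 0 + st.1 *: e 2)%R + (e 1 + st.2 *: e 2)%R)%MS &&
                     (L :&: pi_ x 2 == (e 1 + st.2 *: e 2)%R)%MS.
Proof.
move=> rL sL rP nP; have pi2 : (pi_ x 2 :=: e 1 + e 2)%MS.
  by rewrite pi2E; apply: adds_eqmx; apply: x_e; lia.
have sig2 : (Sigma x 2 :=: e 0 + (e 1 + e 2))%MS.
  by rewrite Sigma2E; apply: adds_eqmx; [|apply: adds_eqmx]; apply: x_e; lia.
have sP : (L :&: pi_ x 2 <= e 1 + e 2)%MS by rewrite -pi2 capmxSr.
have Px : ~~ (L :&: pi_ x 2 == e 2)%MS.
  by apply: contra nP => /eqmxP PE; apply/eqmxP/(eqmx_trans PE)/eqmx_sym/x_e.
have [t pt] := point_on_line rP (e_neq0 n_ge2) sP Px.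
have [||s Ls] := line_normal_form (t := t) rL.
- by rewrite -sig2.
- exact: eqmx_trans (cap_eqmx (eqmx_refl _) (eqmx_sym pi2)) pt.
by exists (s, t); apply/andP; split; apply/eqmxP.
Qed.

Lemma ell_coefs m (ell : 'I_m -> 'M[K]_n.+1) :
    (forall a, \rank (ell a) = 2%N /\ (ell a <= Sigma x 2)%MS) ->
    (forall a, \rank (ell a :&: pi_ x 2)%MS = 1%N) ->
    (forall a, ~~ ((ell a :&: pi_ x 2) == x 2%N)%MS) ->
  exists s t : 'I_m -> K,
    (forall a, (ell a :=: (e 0 + s a *: e 2)%R + (e 1 + t a *: e 2)%R)%MS) /\
    (forall a, (ell a :&: pi_ x 2 :=: (e 1 + t a *: e 2)%R)%MS).
Proof.
move=> hell hp hnx2; have lc a := ell_normal_form (hell a).1 (hell a).2 (hp a) (hnx2 a).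
exists (fun a => (xchoose (lc a)).1), (fun a => (xchoose (lc a)).2).
by split=> a; have /andP[/eqmxP ? /eqmxP ?] := xchooseP (lc a).
Qed.

End NormalForms.

Theorem lemma2p1 (K : fieldType) (n : nat) (x y : nat -> 'M[K]_(n.+1))
  (m : nat) (ell : 'I_m -> 'M[K]_(n.+1)) :
  (2 <= n)%N ->
  (forall i : nat, (i <= n)%N -> \rank (x i) = 1%N) ->
  gen_pos x ->
  (forall i : nat, (3 <= i <= n)%N ->
     [/\ \rank (y i) = 1%N, (y i <= x i.-1 + x i)%MS,
         ~~ (y i == x i.-1)%MS & ~~ (y i == x i)%MS]) ->
  (forall i : 'I_m, \rank (ell i) = 2%N /\ (ell i <= Sigma x 2)%MS) ->
  (forall i : 'I_m, \rank (ell i :&: pi_ x 2)%MS = 1%N) ->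
  (forall i j : 'I_m, i != j ->
     ~~ ((ell i :&: pi_ x 2) == (ell j :&: pi_ x 2))%MS) ->
  (forall i : 'I_m, ~~ ((ell i :&: pi_ x 2) == x 2%N)%MS) ->
  (forall J : seq 'I_m, uniq J -> (1 <= size J <= n - 1)%N ->
     [/\ \rank (ellJ x y ell J) = 2%N,
         \rank (pJ x y ell J) = 1%N &
         ((ellJ x y ell J :&: pi_ x (size J).+1) == pJ x y ell J)%MS])
  /\
  (forall J1 J2 : seq 'I_m, uniq J1 -> uniq J2 ->
     (1 <= size J1 <= n - 1)%N -> (1 <= size J2 <= n - 1)%N -> J1 != J2 ->
     ~~ (ellJ x y ell J1 == ellJ x y ell J2)%MS /\
     ~~ (pJ x y ell J1 == pJ x y ell J2)%MS).
Proof.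
move=> n_ge2 rank_x gp hy hell hp hdist hnx2.
pose e i := nz_row (x i).
have x_e i : (i <= n)%N -> (x i :=: e i)%MS by move/rank_x/rank1_nz_row.
have e_neq0 i : (i <= n)%N -> e i != 0 by move/rank_x => rx; rewrite nz_row_eq0 -mxrank_eq0 rx.
have rank_span := rank_span_gen_pos gp x_e.
have [c [c_neq0 y_e]] := y_coefs x_e e_neq0 hy.
have [s [t [ell_e p_e]]] := ell_coefs x_e e_neq0 rank_span n_ge2 hell hp hnx2.
have t_inj : injective t.
  move=> a b tab; apply/eqP/negPn/negP => /hdist/negP; apply; apply/eqmxP.
  by apply: eqmx_trans (p_e a) _; rewrite tab; apply/eqmx_sym.
split => [J _|J1 J2].
  exact: (ellJ_pJ_spec rank_span n_ge2 x_e y_e ell_e p_e).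
exact: (ellJ_pJ_inj rank_span n_ge2 c_neq0 x_e y_e ell_e p_e t_inj).
Qed.
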